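(* Let $A$ be a set and let $\mathcal{E}$ be a set of subsets of $A$ such that (C1) for every $K\subseteq A$, $K\in\mathcal{E}$ if and only if $A\setminus K\notin\mathcal{E}$; and (C2) if $K\in\mathcal{E}$ and $K\subseteq L\subseteq A$, then $L\in\mathcal{E}$. Suppose each member of $A$ chooses one of the six strict total orders on three candidates $a,b,c$, labelled by $\mathbb{Z}/6\mathbb{Z}$ as: $1: a>b>c$, $2: a>c>b$, $3: c>a>b$, $4: c>b>a$, $5: b>c>a$, $6: b>a>c$. For $p\in\mathbb{Z}/6\mathbb{Z}$ let $K(p)$ be the set of members who chose ranking $p$, and $K(p,q,r)=K(p)\cup K(q)\cup K(r)$. Define the collective preference by: for distinct candidates $x,y$, $x$ is collectively preferred to $y$ iff the set of members who rank $x$ above $y$ belongs to $\mathcal{E}$. If the collective preference is a strict total order on $\{a,b,c\}$, then there exists $p$ such that $K(p,p+1,p+2)\in\mathcal{E}$ and $K(p+1,p+2,p+3)\in\mathcal{E}$.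
   Context: Indices are taken modulo $6$. *)

From mathcomp Require Import all_boot.
Set Implicit Arguments. Unset Strict Implicit. Unset Printing Implicit Defensive.

Inductive cand := ca | cb | cc.

(* Rankings are labelled by residues 0..5 (i.e. 'I_6 = Z/6Z); label r here
   corresponds to label r+1 in the paper:
   0: a>b>c, 1: a>c>b, 2: c>a>b, 3: c>b>a, 4: b>c>a, 5: b>a>c. *)
(* pos r x = position of candidate x in ranking r (0 = top). *)
Definition pos (r : 'I_6) (x : cand) : nat :=
  match nat_of_ord r, x with
  | 0, ca => 0 | 0, cb => 1 | 0, cc => 2
  | 1, ca => 0 | 1, cc => 1 | 1, cb => 2
  | 2, cc => 0 | 2, ca => 1 | 2, cb => 2
  | 3, cc => 0 | 3, cb => 1 | 3, ca => 2
  | 4, cb => 0 | 4, cc => 1 | 4, ca => 2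
  | _, cb => 0 | _, ca => 1 | _, cc => 2
  end.

Definition ranks_above (r : 'I_6) (x y : cand) : Prop := (pos r x < pos r y)%N.

Definition Kp {A : Type} (prof : A -> 'I_6) (p : nat) : A -> Prop :=
  fun i => nat_of_ord (prof i) = p %% 6.

Definition K3 {A : Type} (prof : A -> 'I_6) (p q r : nat) : A -> Prop :=
  fun i => Kp prof p i \/ Kp prof q i \/ Kp prof r i.

Definition collective {A : Type} (E : (A -> Prop) -> Prop) (prof : A -> 'I_6)
  (x y : cand) : Prop :=
  x <> y /\ E (fun i => ranks_above (prof i) x y).

Definition strict_total_order (R : cand -> cand -> Prop) : Prop :=
  (forall x, ~ R x x) /\
  (forall x y z, R x y -> R y z -> R x z) /\
  (forall x y, x <> y -> R x y \/ R y x).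

From mathcomp Require Import all_boot.
From HB Require Import structures.

(* The collective order has a top candidate x.  For each opponent y, the
   rankings placing x above y are three cyclically consecutive labels, and
   the blocks obtained for the two opponents of x are adjacent; so both
   winning coalitions of x are contained in K(p,p+1,p+2) and K(p+1,p+2,p+3)
   respectively, and (C2) concludes. *)

Definition cand_eqb (x y : cand) : bool :=
  match x, y with ca, ca | cb, cb | cc, cc => true | _, _ => false end.

Lemma cand_eqP : Equality.axiom cand_eqb.
Proof. by case; case; constructor. Qed.

HB.instance Definition _ := hasDecEq.Build cand cand_eqP.

Lemma mem_cand (x : cand) : x \in [:: ca; cb; cc].
Proof. by case: x. Qed.

Section TotalOrderMax.

Variables (T : eqType) (R : T -> T -> Prop).
Hypothesis R_trans : forall x y z, R x y -> R y z -> R x z.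
Hypothesis R_total : forall x y, x <> y -> R x y \/ R y x.

Lemma total_order_has_max (h : T) (s : seq T) :
  exists2 x, x \in h :: s & forall y, y \in h :: s -> y != x -> R x y.
Proof.
elim: s h => [|h' s IHs] h.
  by exists h => [|y]; rewrite ?mem_head // mem_seq1 => /eqP->; rewrite eqxx.
have [t t_s t_max] := IHs h'.
have [<-|/eqP t_ne_h] := eqVneq t h.
  by exists t => [|y /predU1P[->|/t_max]]; rewrite ?mem_head ?eqxx.
have t_hs : t \in h :: h' :: s by rewrite in_cons t_s orbT.
have [Rht|Rth] := R_total h t (nesym t_ne_h).
  exists h => [|y /predU1P[->|y_s]]; rewrite ?mem_head ?eqxx //.
  have [-> //|y_ne_t _] := eqVneq y t.
  exact: R_trans Rht (t_max y y_s y_ne_t).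
by exists t => // y /predU1P[->|/t_max].
Qed.

End TotalOrderMax.

(* [K3 prof p p.+1 p.+2 i] is convertible to [in_block (prof i) p]. *)
Definition in_block (r : 'I_6) (p : nat) : Prop :=
  nat_of_ord r = p %% 6 \/ nat_of_ord r = p.+1 %% 6 \/ nat_of_ord r = p.+2 %% 6.

Lemma ranks_above_blocks (x : cand) : exists p y z,
  [/\ y <> x, z <> x,
      forall r, ranks_above r x y -> in_block r p
    & forall r, ranks_above r x z -> in_block r p.+1].
Proof.
by case: x; [exists 5, cc, cb | exists 3, ca, cc | exists 1, cb, ca];
  split=> // -[[|[|[|[|[|[|r]]]]]] ?]; rewrite /ranks_above /in_block /=; auto.
Qed.

Theorem mainTheorem4 (A : Type) (E : (A -> Prop) -> Prop)
  (C1 : forall K : A -> Prop, E K <-> ~ E (fun i => ~ K i))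
  (C2 : forall K L : A -> Prop, E K -> (forall i, K i -> L i) -> E L)
  (prof : A -> 'I_6)
  (Hord : strict_total_order (collective E prof)) :
  exists p : nat, E (K3 prof p p.+1 p.+2) /\ E (K3 prof p.+1 p.+2 p.+3).
Proof.
have [_ [R_trans R_total]] := Hord.
have [x _ x_top] := @total_order_has_max _ _ R_trans R_total ca [:: cb; cc].
have [p [y [z [y_ne_x z_ne_x y_block z_block]]]] := ranks_above_blocks x.
have [_ E_xy] := x_top y (mem_cand y) (introN eqP y_ne_x).
have [_ E_xz] := x_top z (mem_cand z) (introN eqP z_ne_x).
by exists p; split; [apply: C2 E_xy _ => i /y_block | apply: C2 E_xz _ => i /z_block].
Qed.
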